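(* In the setting described in the context, the probability $\Pr(y)=|\phi_k(y)|^2$ of observing $y\in\{0,1,\dots,N-1\}$ after the Amplified-QFT is given exactly by: (A) if $y=0$: $\Pr(y)=\cos^2(2k\theta)$; (B) if $Py\equiv 0 \pmod N$ and $y\neq 0$: $\Pr(y)=\tan^2\theta\,\sin^2(2k\theta)$; (C) if $Py\not\equiv 0\pmod N$ and $MPy\not\equiv 0 \pmod N$: $\Pr(y)=\dfrac{1}{M^2}\tan^2\theta\,\sin^2(2k\theta)\,\dfrac{\sin^2(\pi MPy/N)}{\sin^2(\pi Py/N)}$; (D) if $Py\not\equiv 0\pmod N$ and $MPy\equiv 0\pmod N$: $\Pr(y)=0$.
   Context: Setting: $N\ge 2$ is an integer, $\mathcal L=\{0,1,\dots,N-1\}$, and $s\ge 0$, $P\ge 1$, $M\ge 1$ are integers with $M<N$ and $s+(M-1)P\le N-1$; $A=\{s+rP: r=0,1,\dots,M-1\}\subset\mathcal L$ (so $|A|=M$). Let $\omega=e^{-2\pi i/N}$. Let $\theta\in(0,\pi/2)$ be defined by $\sin\theta=\sqrt{M/N}$ (so $\cos\theta=\sqrt{1-M/N}$), and $k=\lfloor \pi/(4\theta)\rfloor$. Put $a_k=\frac{1}{\sqrt M}\sin((2k+1)\theta)$, $b_k=\frac{1}{\sqrt{N-M}}\cos((2k+1)\theta)$, and let $\psi_k\in\mathbb C^N$ be the state with $\psi_k(z)=a_k$ for $z\in A$ and $\psi_k(z)=b_k$ for $z\notin A$ (this is the state produced by $k$ Grover iterations for the marked set $A$). The quantum Fourier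 transform is applied: $\phi_k(y)=\frac{1}{\sqrt N}\sum_{z=0}^{N-1}\psi_k(z)\omega^{zy}$, and $\Pr(y)=|\phi_k(y)|^2$. *)

From Stdlib Require Import Reals Lra Lia ZArith Arith List.
Open Scope R_scope.

Definition inA (s P M z : nat) : bool :=
  existsb (fun r => Nat.eqb z (s + r * P)) (seq 0 M).

Definition kGrover (theta : R) : nat := Z.to_nat (Int_part (PI / (4 * theta))).

Definition a_k (M : nat) (theta : R) (k : nat) : R :=
  / sqrt (INR M) * sin ((2 * INR k + 1) * theta).
Definition b_k (N M : nat) (theta : R) (k : nat) : R :=
  / sqrt (INR N - INR M) * cos ((2 * INR k + 1) * theta).

Definition psi (N s P M : nat) (theta : R) (k z : nat) : R :=
  if inA s P M z then a_k M theta k else b_k N M theta k.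

(* omega^(z y) = exp(-2 pi i z y / N) = cos(-2 pi z y/N) + i sin(-2 pi z y/N) *)
Definition om_re (N z y : nat) : R := cos (- 2 * PI * INR (z * y) / INR N).
Definition om_im (N z y : nat) : R := sin (- 2 * PI * INR (z * y) / INR N).

Definition sumN (N : nat) (f : nat -> R) : R :=
  fold_right Rplus 0 (map f (seq 0 N)).

Definition phi_re (N s P M : nat) (theta : R) (k y : nat) : R :=
  / sqrt (INR N) * sumN N (fun z => psi N s P M theta k z * om_re N z y).
Definition phi_im (N s P M : nat) (theta : R) (k y : nat) : R :=
  / sqrt (INR N) * sumN N (fun z => psi N s P M theta k z * om_im N z y).

Definition Prob (N s P M : nat) (theta : R) (k y : nat) : R :=
  (phi_re N s P M theta k y) ^ 2 + (phi_im N s P M theta k y) ^ 2.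

From Stdlib Require Import Reals Lra Lia ZArith Arith List.
Open Scope R_scope.

(* The Grover state takes only two values, [a_k] on A and [b_k] off A, so its
   Fourier coefficient at y is [b_k] times the full character sum plus
   [a_k - b_k] times the character sum over the arithmetic progression A.
   For y <> 0 the full sum vanishes, and the sum over A is a geometric sum of
   ratio exp(-2 pi i P y / N), of squared modulus M^2 when P y = 0 mod N and
   sin^2(pi M P y / N) / sin^2(pi P y / N) otherwise.  What remains is
   trigonometry of the Grover angle: sin theta sqrt N = sqrt M and
   cos theta sqrt N = sqrt (N - M) turn the amplitudes into functions of
   (2k+1) theta - theta = 2k theta. *)

Lemma sumN_S n f : sumN (S n) f = sumN n f + f n.
Proof.
  unfold sumN. rewrite seq_S, map_app, fold_right_app. simpl.
  induction (seq 0 n) as [|a l IH]; simpl; [ring | rewrite IH; ring].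
Qed.

Lemma sumN_ext n f g : (forall i, (i < n)%nat -> f i = g i) -> sumN n f = sumN n g.
Proof. induction n; intros H; [reflexivity|]. rewrite !sumN_S, IHn, H; auto. Qed.

Lemma sumN_add n f g : sumN n (fun i => f i + g i) = sumN n f + sumN n g.
Proof. induction n; [unfold sumN; simpl; ring|]. rewrite !sumN_S, IHn; ring. Qed.

Lemma sumN_scal n c f : sumN n (fun i => c * f i) = c * sumN n f.
Proof. induction n; [unfold sumN; simpl; ring|]. rewrite !sumN_S, IHn; ring. Qed.

Lemma sumN_const n c : sumN n (fun _ => c) = INR n * c.
Proof. induction n; [unfold sumN; simpl; ring|]. rewrite !sumN_S, IHn, S_INR; ring. Qed.

Lemma sumN_eqb n c h :
  sumN n (fun z => if Nat.eqb z c then h z else 0) = if Nat.ltb c n then h c else 0.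
Proof.
  induction n; [reflexivity|]. rewrite sumN_S, IHn.
  destruct (Nat.eqb n c) eqn:E1, (Nat.ltb c n) eqn:E2, (Nat.ltb c (S n)) eqn:E3;
    rewrite ?Nat.eqb_eq, ?Nat.eqb_neq, ?Nat.ltb_lt, ?Nat.ltb_ge in *; subst; try lia; ring.
Qed.

Lemma inA_S s P M z : inA s P (S M) z = (inA s P M z || Nat.eqb z (s + M * P))%bool.
Proof. unfold inA. rewrite seq_S, existsb_app. simpl. now rewrite Bool.orb_false_r. Qed.

Lemma inA_last s P M : (1 <= P)%nat -> inA s P M (s + M * P) = false.
Proof.
  intros HP. apply Bool.not_true_iff_false. intros H.
  apply existsb_exists in H as [r [Hr E]]. apply in_seq in Hr. apply Nat.eqb_eq in E. nia.
Qed.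

Lemma sumN_inA N s P M h :
  (1 <= P)%nat -> (forall r, (r < M)%nat -> (s + r * P < N)%nat) ->
  sumN N (fun z => if inA s P M z then h z else 0) = sumN M (fun r => h (s + r * P)%nat).
Proof.
  intros HP. induction M as [|M IH]; intros HB.
  - rewrite (sumN_ext N _ (fun _ => 0)) by reflexivity. rewrite sumN_const, Rmult_0_r. reflexivity.
  - assert (Hlast : Nat.ltb (s + M * P) N = true) by (apply Nat.ltb_lt, HB; lia).
    rewrite sumN_S, <- IH by (intros; apply HB; lia).
    replace (h (s + M * P)%nat) with (sumN N (fun z => if Nat.eqb z (s + M * P) then h z else 0))
      by (now rewrite sumN_eqb, Hlast).
    rewrite <- sumN_add.
    apply sumN_ext. intros z _. rewrite inA_S.
    destruct (Nat.eqb z (s + M * P)) eqn:E.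
    + apply Nat.eqb_eq in E. subst. rewrite inA_last by assumption. simpl. ring.
    + rewrite Bool.orb_false_r. ring.
Qed.

Definition expsum_re (n : nat) (x c : R) : R := sumN n (fun j => cos (INR j * x + c)).
Definition expsum_im (n : nat) (x c : R) : R := sumN n (fun j => sin (INR j * x + c)).
Definition expsum_norm2 (n : nat) (x c : R) : R := expsum_re n x c ^ 2 + expsum_im n x c ^ 2.

Lemma expsum_re_telescope n x c :
  2 * sin (x / 2) * expsum_re n x c = sin ((INR n - / 2) * x + c) - sin (c - x / 2).
Proof.
  unfold expsum_re. induction n.
  - unfold sumN; simpl. replace ((0 - / 2) * x + c) with (c - x / 2) by field. ring.
  - rewrite sumN_S, Rmult_plus_distr_l, IHn, S_INR.
    set (u := INR n * x + c).
    replace ((INR n + 1 - / 2) * x + c) with (u + x / 2) by (unfold u; field).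
    replace ((INR n - / 2) * x + c) with (u - x / 2) by (unfold u; field).
    rewrite sin_plus, sin_minus. ring.
Qed.

Lemma expsum_im_telescope n x c :
  2 * sin (x / 2) * expsum_im n x c = cos (c - x / 2) - cos ((INR n - / 2) * x + c).
Proof.
  unfold expsum_im. induction n.
  - unfold sumN; simpl. replace ((0 - / 2) * x + c) with (c - x / 2) by field. ring.
  - rewrite sumN_S, Rmult_plus_distr_l, IHn, S_INR.
    set (u := INR n * x + c).
    replace ((INR n + 1 - / 2) * x + c) with (u + x / 2) by (unfold u; field).
    replace ((INR n - / 2) * x + c) with (u - x / 2) by (unfold u; field).
    rewrite (cos_plus u), (cos_minus u). ring.
Qed.

Lemma expsum_norm2_dirichlet n x c :
  sin (x / 2) <> 0 -> expsum_norm2 n x c = sin (INR n * x / 2) ^ 2 / sin (x / 2) ^ 2.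
Proof.
  intros Hs. unfold expsum_norm2.
  pose proof (expsum_re_telescope n x c) as Ere. pose proof (expsum_im_telescope n x c) as Eim.
  set (al := (INR n - / 2) * x + c) in *. set (be := c - x / 2) in *.
  (* [2 sin (x/2)] times the sum is [i (e^(i be) - e^(i al))], of squared modulus [2 - 2 cos (al - be)]. *)
  assert (Hd : (2 * sin (x / 2)) ^ 2 * (expsum_re n x c ^ 2 + expsum_im n x c ^ 2)
               = 2 - 2 * cos (al - be)).
  { rewrite cos_minus.
    replace ((2 * sin (x / 2)) ^ 2 * (expsum_re n x c ^ 2 + expsum_im n x c ^ 2))
      with ((2 * sin (x / 2) * expsum_re n x c) ^ 2 + (2 * sin (x / 2) * expsum_im n x c) ^ 2)
      by ring.
    rewrite Ere, Eim. pose proof (sin2_cos2 al). pose proof (sin2_cos2 be). unfold Rsqr in *. nra. }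
  replace (al - be) with (2 * (INR n * x / 2)) in Hd by (unfold al, be; field).
  rewrite cos_2a_sin in Hd.
  apply (Rmult_eq_reg_l ((2 * sin (x / 2)) ^ 2)).
  - rewrite Hd. field. exact Hs.
  - apply pow_nonzero. lra.
Qed.

Lemma sin_PI_mul_div_eq_0 m N :
  (0 < N)%nat -> sin (PI * INR m / INR N) = 0 <-> (m mod N = 0)%nat.
Proof.
  intros HN. assert (HNr : INR N <> 0) by (apply not_0_INR; lia).
  pose proof PI_RGT_0 as HPI. split.
  - intros H. apply sin_eq_0_0 in H as [q Hq].
    assert (Em : INR m = IZR q * INR N).
    { replace (INR m) with (PI * INR m / INR N * INR N / PI) by (field; lra).
      rewrite Hq. field. lra. }
    rewrite !INR_IZR_INZ, <- mult_IZR in Em. apply eq_IZR in Em.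
    apply Nat2Z.inj. rewrite Nat2Z.inj_mod, Em. apply Z_mod_mult.
  - intros Hm. apply sin_eq_0_1. exists (Z.of_nat (m / N)).
    rewrite <- INR_IZR_INZ, (Nat.div_mod m N) at 1 by lia.
    rewrite Hm, Nat.add_0_r, mult_INR. field. exact HNr.
Qed.

(* Angle of the character z |-> omega^(z m). *)
Definition freq (N m : nat) : R := - 2 * PI * INR m / INR N.

Lemma half_freq N m : (0 < N)%nat -> freq N m / 2 = - (PI * INR m / INR N).
Proof. intros HN. unfold freq. field. apply not_0_INR; lia. Qed.

Lemma expsum_norm2_freq N n m c :
  (0 < N)%nat -> (m mod N <> 0)%nat ->
  expsum_norm2 n (freq N m) c
  = sin (PI * INR (n * m) / INR N) ^ 2 / sin (PI * INR m / INR N) ^ 2.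
Proof.
  intros HN Hm.
  assert (Hs : sin (PI * INR m / INR N) <> 0) by (now rewrite sin_PI_mul_div_eq_0).
  rewrite expsum_norm2_dirichlet.
  - replace (INR n * freq N m / 2) with (- (PI * INR (n * m) / INR N))
      by (unfold freq; rewrite mult_INR; field; apply not_0_INR; lia).
    rewrite half_freq, !sin_neg by exact HN. field. exact Hs.
  - rewrite half_freq, sin_neg by exact HN. now apply Ropp_neq_0_compat.
Qed.

Lemma expsum_norm2_resonant N n m c :
  (0 < N)%nat -> (m mod N = 0)%nat -> expsum_norm2 n (freq N m) c = INR n ^ 2.
Proof.
  intros HN Hm.
  set (q := (m / N)%nat).
  assert (Hx : freq N m = - (2 * INR q * PI)).
  { unfold freq, q. rewrite (Nat.div_mod m N) at 1 by lia. rewrite Hm, Nat.add_0_r, mult_INR.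
    field. apply not_0_INR; lia. }
  assert (Hre : expsum_re n (freq N m) c = INR n * cos c).
  { unfold expsum_re. rewrite <- sumN_const. apply sumN_ext. intros j _.
    rewrite <- (cos_period _ (j * q)), Hx, mult_INR. f_equal. ring. }
  assert (Him : expsum_im n (freq N m) c = INR n * sin c).
  { unfold expsum_im. rewrite <- sumN_const. apply sumN_ext. intros j _.
    rewrite <- (sin_period _ (j * q)), Hx, mult_INR. f_equal. ring. }
  unfold expsum_norm2. rewrite Hre, Him.
  pose proof (sin2_cos2 c) as E. unfold Rsqr in E. nra.
Qed.

Lemma expsum_full_period_eq_0 N y :
  (0 < y < N)%nat -> expsum_re N (freq N y) 0 = 0 /\ expsum_im N (freq N y) 0 = 0.
Proof.
  intros Hy. assert (HN : (0 < N)%nat) by lia.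
  assert (Hy' : (y mod N <> 0)%nat) by (rewrite Nat.mod_small; lia).
  pose proof (expsum_norm2_freq N N y 0 HN Hy') as E.
  rewrite (proj2 (sin_PI_mul_div_eq_0 (N * y) N HN)) in E
    by (rewrite Nat.mul_comm; apply Nat.Div0.mod_mul).
  unfold expsum_norm2, Rdiv in E. rewrite pow_i, Rmult_0_l in E by lia. split; nra.
Qed.

Lemma freq_0 N : freq N 0 = 0.
Proof. unfold freq, Rdiv. simpl. ring. Qed.

Lemma expsum_re_0 n : expsum_re n 0 0 = INR n.
Proof.
  unfold expsum_re. rewrite (sumN_ext n _ (fun _ => 1)), sumN_const by
    (intros j _; rewrite Rmult_0_r, Rplus_0_r; apply cos_0).
  apply Rmult_1_r.
Qed.

Lemma expsum_im_0 n : expsum_im n 0 0 = 0.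
Proof.
  unfold expsum_im. rewrite (sumN_ext n _ (fun _ => 0)), sumN_const by
    (intros j _; rewrite Rmult_0_r, Rplus_0_r; apply sin_0).
  apply Rmult_0_r.
Qed.

Lemma sumN_om_re_affine N s P n y :
  (0 < N)%nat ->
  sumN n (fun r => om_re N (s + r * P) y) = expsum_re n (freq N (P * y)) (freq N (s * y)).
Proof.
  intros HN. apply sumN_ext. intros r _. unfold om_re, freq. f_equal.
  rewrite !mult_INR, plus_INR, mult_INR. field. apply not_0_INR; lia.
Qed.

Lemma sumN_om_im_affine N s P n y :
  (0 < N)%nat ->
  sumN n (fun r => om_im N (s + r * P) y) = expsum_im n (freq N (P * y)) (freq N (s * y)).
Proof.
  intros HN. apply sumN_ext. intros r _. unfold om_im, freq. f_equal.
  rewrite !mult_INR, plus_INR, mult_INR. field. apply not_0_INR; lia.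
Qed.

Lemma sumN_om_re N y : (0 < N)%nat -> sumN N (fun z => om_re N z y) = expsum_re N (freq N y) 0.
Proof.
  intros HN. rewrite (sumN_ext N _ (fun z => om_re N (0 + z * 1) y)) by (intros; f_equal; lia).
  now rewrite sumN_om_re_affine, Nat.mul_1_l, Nat.mul_0_l, freq_0.
Qed.

Lemma sumN_om_im N y : (0 < N)%nat -> sumN N (fun z => om_im N z y) = expsum_im N (freq N y) 0.
Proof.
  intros HN. rewrite (sumN_ext N _ (fun z => om_im N (0 + z * 1) y)) by (intros; f_equal; lia).
  now rewrite sumN_om_im_affine, Nat.mul_1_l, Nat.mul_0_l, freq_0.
Qed.

Section GroverAngle.

Variables (N M : nat) (theta : R).
Hypothesis HM : (1 <= M)%nat.
Hypothesis HMN : (M < N)%nat.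
Hypothesis Hth0 : 0 < theta.
Hypothesis Hth1 : theta < PI / 2.
Hypothesis Hsin : sin theta = sqrt (INR M / INR N).

Lemma sin_grover_angle : sin theta * sqrt (INR N) = sqrt (INR M).
Proof.
  assert (HN : 0 < INR N) by (apply lt_0_INR; lia).
  rewrite Hsin, sqrt_div_alt by exact HN. field.
  apply Rgt_not_eq, sqrt_lt_R0, HN.
Qed.

Lemma cos_grover_angle : cos theta * sqrt (INR N) = sqrt (INR N - INR M).
Proof.
  assert (HN : 0 < INR N) by (apply lt_0_INR; lia).
  assert (Hc : 0 < cos theta) by (apply cos_gt_0; lra).
  assert (Hw : 0 < sqrt (INR N)) by (apply sqrt_lt_R0, HN).
  rewrite <- (sqrt_Rsqr (cos theta * sqrt (INR N))) by nra.
  f_equal. unfold Rsqr.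
  replace (cos theta * sqrt (INR N) * (cos theta * sqrt (INR N)))
    with ((sin theta ^ 2 + cos theta ^ 2) * (sqrt (INR N) * sqrt (INR N))
          - (sin theta * sqrt (INR N)) * (sin theta * sqrt (INR N))) by ring.
  rewrite sin_grover_angle, !sqrt_sqrt, <- !Rsqr_pow2, sin2_cos2 by apply pos_INR. ring.
Qed.

Variable k : nat.

Let u := sqrt (INR M).
Let v := sqrt (INR N - INR M).
Let w := sqrt (INR N).
Let T := (2 * INR k + 1) * theta.

Lemma grover_angle_parts :
  0 < u /\ 0 < v /\ 0 < w /\ u * u = INR M /\ v * v = INR N - INR M /\ w * w = INR N /\
  sin theta = u / w /\ cos theta = v / w.
Proof.
  assert (HN : 0 < INR N) by (apply lt_0_INR; lia).
  assert (HMp : 0 < INR M) by (apply lt_0_INR; lia).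
  assert (HNM : INR M < INR N) by (apply lt_INR; lia).
  assert (Hw : 0 < w) by (apply sqrt_lt_R0, HN).
  unfold u, v, w in *. repeat split; try (apply sqrt_lt_R0 || apply sqrt_sqrt); try lra.
  - rewrite <- sin_grover_angle. field. lra.
  - rewrite <- cos_grover_angle. field. lra.
Qed.

Lemma grover_amplitude_gap :
  (a_k M theta k - b_k N M theta k) ^ 2 / INR N
  = / INR M ^ 2 * tan theta ^ 2 * sin (2 * INR k * theta) ^ 2.
Proof.
  destruct grover_angle_parts as (Hu & Hv & Hw & Hu2 & _ & Hw2 & Hs & Hc).
  replace (2 * INR k * theta) with (T - theta) by (unfold T; ring).
  unfold tan, a_k, b_k. fold u v T. rewrite sin_minus, Hs, Hc, <- Hu2, <- Hw2.
  field. lra.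
Qed.

Lemma grover_amplitude_mean :
  (INR M * a_k M theta k + (INR N - INR M) * b_k N M theta k) ^ 2 / INR N
  = cos (2 * INR k * theta) ^ 2.
Proof.
  destruct grover_angle_parts as (Hu & Hv & Hw & Hu2 & Hv2 & Hw2 & Hs & Hc).
  replace (2 * INR k * theta) with (T - theta) by (unfold T; ring).
  unfold a_k, b_k. fold u v T. rewrite cos_minus, Hs, Hc, <- Hv2, <- Hu2, <- Hw2.
  field. lra.
Qed.

End GroverAngle.

Section AmplifiedQFT.

Variables (N s P M : nat) (theta : R) (k : nat).
Hypothesis HN : (0 < N)%nat.
Hypothesis HP : (1 <= P)%nat.
Hypothesis HA : forall r, (r < M)%nat -> (s + r * P < N)%nat.

Let a := a_k M theta k.
Let b := b_k N M theta k.

Lemma sumN_psi_mul g :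
  sumN N (fun z => psi N s P M theta k z * g z)
  = b * sumN N g + (a - b) * sumN M (fun r => g (s + r * P)%nat).
Proof.
  rewrite <- (sumN_scal M), <- (sumN_inA N s P M (fun z => (a - b) * g z)) by assumption.
  rewrite <- sumN_scal, <- sumN_add. apply sumN_ext. intros z _.
  unfold psi. fold a b. destruct (inA s P M z); ring.
Qed.

Lemma Prob_expsum y :
  Prob N s P M theta k y
  = / INR N * ((b * expsum_re N (freq N y) 0
                + (a - b) * expsum_re M (freq N (P * y)) (freq N (s * y))) ^ 2
               + (b * expsum_im N (freq N y) 0
                  + (a - b) * expsum_im M (freq N (P * y)) (freq N (s * y))) ^ 2).
Proof.
  unfold Prob, phi_re, phi_im. rewrite !sumN_psi_mul.
  rewrite sumN_om_re, sumN_om_im, sumN_om_re_affine, sumN_om_im_affine by exact HN.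
  rewrite !Rpow_mult_distr, pow_inv, pow2_sqrt by apply pos_INR. ring.
Qed.

Lemma Prob_zero_freq :
  Prob N s P M theta k 0 = (INR M * a + (INR N - INR M) * b) ^ 2 / INR N.
Proof.
  rewrite Prob_expsum, !Nat.mul_0_r, !freq_0, !expsum_re_0, !expsum_im_0.
  field. apply not_0_INR; lia.
Qed.

Lemma Prob_nonzero_freq y :
  (0 < y < N)%nat ->
  Prob N s P M theta k y
  = (a - b) ^ 2 / INR N * expsum_norm2 M (freq N (P * y)) (freq N (s * y)).
Proof.
  intros Hy. rewrite Prob_expsum. destruct (expsum_full_period_eq_0 N y Hy) as [-> ->].
  unfold expsum_norm2. field. apply not_0_INR; lia.
Qed.

End AmplifiedQFT.

Theorem mainTheorem1 (N s P M : nat) (theta : R)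
  (HN : (2 <= N)%nat) (HP : (1 <= P)%nat) (HM1 : (1 <= M)%nat) (HMN : (M < N)%nat)
  (HA : (s + (M - 1) * P <= N - 1)%nat)
  (Hth0 : 0 < theta) (Hth1 : theta < PI / 2)
  (Hsin : sin theta = sqrt (INR M / INR N))
  (y : nat) (Hy : (y < N)%nat) :
  let k := kGrover theta in
  let pr := Prob N s P M theta k y in
  (y = 0%nat -> pr = (cos (2 * INR k * theta)) ^ 2) /\
  ((P * y) mod N = 0%nat -> y <> 0%nat ->
     pr = (tan theta) ^ 2 * (sin (2 * INR k * theta)) ^ 2) /\
  ((P * y) mod N <> 0%nat -> (M * P * y) mod N <> 0%nat ->
     pr = / (INR M) ^ 2 * (tan theta) ^ 2 * (sin (2 * INR k * theta)) ^ 2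
          * (sin (PI * INR (M * P * y) / INR N)) ^ 2
          / (sin (PI * INR (P * y) / INR N)) ^ 2) /\
  ((P * y) mod N <> 0%nat -> (M * P * y) mod N = 0%nat -> pr = 0).
Proof.
  intros k pr.
  assert (HN0 : (0 < N)%nat) by lia.
  assert (HAr : forall r, (r < M)%nat -> (s + r * P < N)%nat) by (intros; nia).
  assert (HMr : INR M <> 0) by (apply not_0_INR; lia).
  assert (Hgap := grover_amplitude_gap N M theta HM1 HMN Hth0 Hth1 Hsin k).
  assert (Hnonres : (P * y) mod N <> 0%nat ->
     pr = / (INR M) ^ 2 * (tan theta) ^ 2 * (sin (2 * INR k * theta)) ^ 2
          * (sin (PI * INR (M * P * y) / INR N)) ^ 2
          / (sin (PI * INR (P * y) / INR N)) ^ 2).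
  { intros Hm. assert (Hy0 : y <> 0%nat) by (intros ->; apply Hm; rewrite Nat.mul_0_r; apply Nat.Div0.mod_0_l).
    assert (Hs : sin (PI * INR (P * y) / INR N) <> 0) by now rewrite sin_PI_mul_div_eq_0.
    unfold pr. rewrite Prob_nonzero_freq, expsum_norm2_freq, Hgap, Nat.mul_assoc by (auto; lia).
    field. auto. }
  split; [|split; [|split]].
  - intros ->. unfold pr. rewrite Prob_zero_freq by auto.
    apply grover_amplitude_mean; assumption.
  - intros Hres Hy0. unfold pr.
    rewrite Prob_nonzero_freq, expsum_norm2_resonant, Hgap by (auto; lia). field. auto.
  - intros Hm _. exact (Hnonres Hm).
  - intros Hm Hmz. rewrite (Hnonres Hm), (proj2 (sin_PI_mul_div_eq_0 _ N HN0) Hmz).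
    unfold Rdiv. rewrite pow_i by lia. ring.
Qed.
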